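(* Let $(m,Q)$ be a deformation pair of the lattice polytope $P$. Then the map $\xi_{(m,Q)}:\widetilde M\to\widetilde M$, $\xi_{(m,Q)}(h)=h-\eta_Q(\pi_M(h))\,m$, maps the monoid $S_P$ bijectively onto the monoid $S_{P_{(m,Q)}}$, with inverse $\xi_{(-m,Q)}$.
   Context: $N\cong\mathbb{Z}^n$, $M$ dual, $\widetilde M=M\oplus\mathbb{Z}$ with projections $\pi_M,\pi_{\mathbb{Z}}$. For a lattice polytope $P$: $\sigma$ the cone generated by $\{(v,1):v\in P\}$, $S_P=\sigma^\vee\cap\widetilde M$. For a polytope $Q$ and $c\in M$, $\eta_Q(c)=-\min_{v\in Q}\langle v,c\rangle$. $\varphi_m(n)=\langle\pi_M(m),n\rangle+\pi_{\mathbb{Z}}(m)$. A deformation pair $(m,Q)$ of $P$: $m\in\widetilde M$, $Q\subset\{n:\langle\pi_M(m),n\rangle=0\}$ a lattice polytope such that $iQ$ is a Minkowski summand of $P\cap(\varphi_m=i)$ for all $i\in\mathbb{N}$ with nonempty slice. Laurent polynomials are normalized (coefficient $1$ at vertices of the Newton polytope $\Delta$); $f$ is $(m,g)$-mutable if $f=\sum_if_i$ with $f_i$ supported on $(\varphi_m=i)\cap N$ and $g^i\mid f_i$ for $i\ge0$, and $\operatorname{mut}^g_mf=\sum_if_i/g^i$. $P_{(m,Q)}:=\Delta(\operatorname{mut}^g_mf)$ for any $f,g$ with $\Delta(f)=P$, $\Delta(g)=Q$, $f$ $(m,g)$-mutable (such exist and the result does not depend on the choice). *)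

From HB Require Import structures.
From mathcomp Require Import all_boot all_order all_algebra.
From mathcomp Require Import finmap.
From mathcomp Require Import monalg.
From mathcomp Require Import reals.

Set Implicit Arguments.
Unset Strict Implicit.
Unset Printing Implicit Defensive.

Import Order.TTheory GRing.Theory Num.Theory.
Local Open Scope ring_scope.

(* N = Z^n and its dual M = Z^n, both represented by row vectors. *)
Definition Lat (n : nat) := 'rV[int]_n.
(* \tilde M = M (+) Z ; pi_M = fst, pi_Z = snd *)
Definition Mt (n : nat) := (Lat n * int)%type.

Definition dot n (u v : Lat n) : int := \sum_(i < n) u 0 i * v 0 i.
Definition dotR (R : realType) n (u : Lat n) (x : 'rV[R]_n) : R :=
  \sum_(i < n) (u 0 i)%:~R * x 0 i.
Definition emb (R : realType) n (v : Lat n) : 'rV[R]_n :=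
  map_mx (fun z : int => z%:~R) v.

Definition phi n (m : Mt n) (e : Lat n) : int := dot m.1 e + m.2.
Definition phiR (R : realType) n (m : Mt n) (x : 'rV[R]_n) : R :=
  dotR m.1 x + m.2%:~R.

Definition conv (R : realType) n (S : seq 'rV[R]_n) (x : 'rV[R]_n) : Prop :=
  exists lam : 'I_(size S) -> R,
    (forall j, 0 <= lam j) /\ \sum_j lam j = 1 /\
    x = \sum_j lam j *: S`_j.

Definition lconv (R : realType) n (V : seq (Lat n)) : 'rV[R]_n -> Prop :=
  conv [seq emb R v | v <- V].

Arguments lconv R {n} V _.

Definition is_polytope (R : realType) n (A : 'rV[R]_n -> Prop) : Prop :=
  exists S : seq 'rV[R]_n, S != [::] /\ forall x, A x <-> conv S x.

Definition minkowski_sum (R : realType) n (A B : 'rV[R]_n -> Prop) x : Prop :=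
  exists a b, A a /\ B b /\ x = a + b.

Definition dilate (R : realType) n (t : R) (A : 'rV[R]_n -> Prop) x : Prop :=
  exists a, A a /\ x = t *: a.

Definition is_minkowski_summand (R : realType) n (B A : 'rV[R]_n -> Prop) :=
  exists C, is_polytope C /\ forall x, A x <-> minkowski_sum C B x.

Definition slice (R : realType) n (A : 'rV[R]_n -> Prop) (m : Mt n) (i : int)
  (x : 'rV[R]_n) : Prop := A x /\ phiR m x = i%:~R.

Definition is_vertex (R : realType) n (A : 'rV[R]_n -> Prop) (x : 'rV[R]_n) :=
  A x /\ forall y z (t : R), A y -> A z -> 0 < t < 1 ->
    x = t *: y + (1 - t) *: z -> y = x /\ z = x.

(* ---------- Deformation pairs ----------
   P = lconv VP, Q = lconv VQ (lattice polytopes, VQ nonempty). *)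
Definition deformation_pair (R : realType) n (VP : seq (Lat n)) (m : Mt n)
  (VQ : seq (Lat n)) : Prop :=
  VQ != [::] /\
  (forall x, lconv R VQ x -> dotR m.1 x = 0) /\
  forall i : nat, (exists x, slice (lconv R VP) m i%:Z x) ->
    is_minkowski_summand (dilate i%:R (lconv R VQ)) (slice (lconv R VP) m i%:Z).

(* eta_Q(c) = - min_{v in Q} <v, c>; for Q = conv(VQ) the minimum of the
   linear form is attained on the generators VQ. *)
Definition eta n (VQ : seq (Lat n)) (c : Lat n) : int :=
  - \big[Num.min/dot (head 0 VQ) c]_(v <- VQ) dot v c.

Definition xi n (VQ : seq (Lat n)) (m : Mt n) (h : Mt n) : Mt n :=
  (h.1 - (eta VQ h.1) *: m.1, h.2 - eta VQ h.1 * m.2).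

Definition negm n (m : Mt n) : Mt n := (- m.1, - m.2).

Definition cone_of (R : realType) n (P : 'rV[R]_n -> Prop) (w : 'rV[R]_n * R)
  : Prop :=
  exists (k : nat) (lam : 'I_k -> R) (v : 'I_k -> 'rV[R]_n),
    (forall j, 0 <= lam j /\ P (v j)) /\
    w = (\sum_j lam j *: v j, \sum_j lam j).

Definition S_P (R : realType) n (P : 'rV[R]_n -> Prop) (h : Mt n) : Prop :=
  forall w, cone_of P w -> 0 <= dotR h.1 w.1 + h.2%:~R * w.2.

(* Laurent polynomials over K in n variables: finitely supported functions
   N -> K (exponent e <-> monomial x^e). *)
Definition lpoly (K : fieldType) n := {malg K[Lat n]}.

Definition lmul (K : fieldType) n (f g : lpoly K n) : lpoly K n :=
  \sum_(a <- msupp f) \sum_(b <- msupp g) << f@_a * g@_b *g (a + b) >>.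

Definition lone (K : fieldType) n : lpoly K n := << 1 *g 0 >>.

Definition lpow (K : fieldType) n (g : lpoly K n) (i : nat) : lpoly K n :=
  iter i (lmul g) (lone K n).

Definition Newton (R : realType) (K : fieldType) n (f : lpoly K n)
  : 'rV[R]_n -> Prop :=
  lconv R [seq e | e <- msupp f].

Arguments Newton R {K n} f _.

Definition normalized (R : realType) (K : fieldType) n (f : lpoly K n) :=
  forall e : Lat n, is_vertex (Newton R f) (emb R e) -> f@_e = 1.

Arguments normalized R {K n} f.

Definition lslice (K : fieldType) n (m : Mt n) (f : lpoly K n) (i : int)
  : lpoly K n :=
  \sum_(e <- msupp f | phi m e == i) << f@_e *g e >>.

(* f is (m,g)-mutable with mut^g_m f = f' : with f = sum_i f_i, there are
   h_i = f_i / g^i (g^i * h_i = f_i for i >= 0, h_i = f_i * g^{-i} for i < 0)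
   and f' = sum_i h_i. *)
Definition Mutation (K : fieldType) n (m : Mt n) (g f f' : lpoly K n) : Prop :=
  exists h : int -> lpoly K n,
    (forall i : int, 0 <= i -> lslice m f i = lmul (lpow g `|i|%N) (h i)) /\
    (forall i : int, i < 0 -> h i = lmul (lslice m f i) (lpow g `|i|%N)) /\
    f' = \sum_(i <- undup [seq phi m e | e <- msupp f]) h i.

From Pilot Require Import Defs.
From HB Require Import structures.
From mathcomp Require Import all_boot all_order all_algebra.
From mathcomp Require Import finmap monalg reals.
From mathcomp Require Import zify.

Set Implicit Arguments.
Unset Strict Implicit.
Unset Printing Implicit Defensive.
Import Order.TTheory GRing.Theory Num.Theory.
Local Open Scope ring_scope.

(* Fix c in M and let nu = min_Q <., c> = - eta_Q(c); since Newton(g) = Q, nu is also the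
   minimum of c on supp g.  Minima of c over supports add under products of Laurent polynomials:
   the lexicographically smallest monomials of two factors multiply to a monomial of the product
   with which nothing cancels.  Hence, writing f_i = g^i h_i (and h_i = f_i g^-i when i < 0), a
   lower bound t for c on supp f_i is the same as the lower bound t - i nu on supp h_i, and supp h_i
   lies on (phi_m = i).  As h is in S_P exactly when <h, (e, 1)> >= 0 on supp f, this turns into
   <h, (e, 1)> + nu phi_m(e) = <xi_(m,Q)(h), (e, 1)> >= 0 on supp f' = U_i supp h_i, and back.
   The two maps are inverse because eta_Q does not change when a multiple of pi_M(m), which
   vanishes on Q, is added to its argument. *)

Lemma exists_argmin_seq (T : eqType) d (O : orderType d) (F : T -> O)
    (s : seq T) x0 :
  x0 \in s -> exists2 x, x \in s & forall y, y \in s -> (F x <= F y)%O.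
Proof.
rewrite -index_mem => x0s.
have [i _ min_i] := @arg_minP _ _ _ (Ordinal x0s) xpredT (fun j => F (nth x0 s j)) isT.
exists (nth x0 s i); first exact: mem_nth.
move=> y ys; have := min_i (Ordinal (etrans (index_mem y s) ys)) isT.
by rewrite /= nth_index.
Qed.

Lemma lexi_mapD (R : numDomainType) (I : Type) (ws : seq I) (F G H : I -> R) :
  ([seq F w + H w | w <- ws] <= [seq G w + H w | w <- ws] :> seqlexi R)%O =
  ([seq F w | w <- ws] <= [seq G w | w <- ws] :> seqlexi R)%O.
Proof. by elim: ws => //= w ws IH; rewrite !lexi_cons !lerD2r IH. Qed.

Lemma sum_seq_delta (T : eqType) (V : nmodType) (s : seq T) (F : T -> V) e :
  uniq s -> \sum_(x <- s) F x *+ (x == e) = F e *+ (e \in s).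
Proof.
elim: s => [|x s IH] /=; first by rewrite big_nil.
case/andP => xs us; rewrite big_cons IH // in_cons.
case: (eqVneq x e) => [<-|ne]; first by rewrite (negbTE xs) /= addr0.
by rewrite add0r.
Qed.

Section Pairing.
Variable n : nat.
Implicit Types u v a b : Lat n.

Lemma dotC u v : dot u v = dot v u.
Proof. by apply: eq_bigr => i _; rewrite mulrC. Qed.

Lemma dotDr u a b : dot u (a + b) = dot u a + dot u b.
Proof. by rewrite /dot -big_split; apply: eq_bigr => i _; rewrite mxE mulrDr. Qed.

Lemma dotDl u a b : dot (a + b) u = dot a u + dot b u.
Proof. by rewrite dotC dotDr !(dotC u). Qed.

Lemma dotZr (t : int) u a : dot u (t *: a) = t * dot u a.
Proof. by rewrite /dot mulr_sumr; apply: eq_bigr => i _; rewrite mxE mulrCA. Qed.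

Lemma dotNr u a : dot u (- a) = - dot u a.
Proof. by rewrite -scaleN1r dotZr mulN1r. Qed.

Lemma dotZl (t : int) u a : dot (t *: a) u = t * dot a u.
Proof. by rewrite dotC dotZr dotC. Qed.

Lemma dotNl u a : dot (- a) u = - dot a u.
Proof. by rewrite dotC dotNr dotC. Qed.

Lemma dot0r u : dot u 0 = 0.
Proof. by rewrite -(scale0r (0 : Lat n)) dotZr mul0r. Qed.

End Pairing.

Section LexKey.
Variables (n : nat) (u : Lat n).

Definition lexkey (e : Lat n) : seqlexi int :=
  dot u e :: [seq e 0 j | j <- enum 'I_n].

Lemma lexkey_inj : injective lexkey.
Proof.
move=> a b [_ /eq_in_map ab]; apply/rowP => j.
by have := ab j; rewrite mem_enum => ->.
Qed.

Lemma lexkey_addr a b c :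
  (lexkey (a + c) <= lexkey (b + c))%O = (lexkey a <= lexkey b)%O.
Proof.
have coordD e : [seq (e + c) 0 j | j <- enum 'I_n] = [seq e 0 j + c 0 j | j <- enum 'I_n].
  by apply: eq_map => j; rewrite mxE.
by rewrite !lexi_cons !dotDr !lerD2r !coordD lexi_mapD.
Qed.

Lemma lexkey_dot a b : (lexkey a <= lexkey b)%O -> dot u a <= dot u b.
Proof. by rewrite lexi_cons => /andP[]. Qed.

Lemma lexkey_min_addE a0 b0 x y :
  (lexkey a0 <= lexkey x)%O -> (lexkey b0 <= lexkey y)%O ->
  x + y = a0 + b0 -> x = a0.
Proof.
move=> a0x b0y xy; apply: (addIr b0); apply: lexkey_inj; apply/le_anti.
by rewrite (lexkey_addr a0) a0x andbT -xy ![x + _]addrC lexkey_addr.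
Qed.

End LexKey.

Section LaurentSupport.
Variables (K : fieldType) (n : nat).
Implicit Types (a b : lpoly K n) (c e : Lat n) (s t : int).

Definition supp_ge c a t := forall e, e \in msupp a -> t <= dot c e.

Definition supp_min c a t := supp_ge c a t /\ exists2 e, e \in msupp a & dot c e = t.

Lemma lmulC : commutative (@lmul K n).
Proof.
move=> a b; rewrite /lmul exchange_big; apply: eq_bigr => y _.
by apply: eq_bigr => x _; rewrite mulrC addrC.
Qed.

Lemma lmul_coef a b e : (lmul a b)@_e =
  \sum_(x <- msupp a) \sum_(y <- msupp b) (a@_x * b@_y) *+ (x + y == e).
Proof.
rewrite /lmul raddf_sum; apply: eq_bigr => x _.
by rewrite raddf_sum; apply: eq_bigr => y _; exact: mcoeffU.
Qed.

Lemma msupp_lmul a b e : e \in msupp (lmul a b) ->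
  exists x y, [/\ x \in msupp a, y \in msupp b & e = x + y].
Proof.
rewrite -mcoeff_neq0 lmul_coef => /eqP sum_neq0.
suff /hasP[x xa /hasP[y yb /eqP <-]] :
    has (fun x => has (fun y => x + y == e) (msupp b)) (msupp a).
  by exists x, y.
apply: contraT => /hasPn no_x; case: sum_neq0.
rewrite big_seq big1 // => x /no_x /hasPn no_y.
by rewrite big_seq big1 // => y /no_y /negbTE ->.
Qed.

Lemma lexmin_msupp_lmul c a b x0 y0 :
  x0 \in msupp a -> (forall x, x \in msupp a -> lexkey c x0 <= lexkey c x)%O ->
  y0 \in msupp b -> (forall y, y \in msupp b -> lexkey c y0 <= lexkey c y)%O ->
  x0 + y0 \in msupp (lmul a b).
Proof.
move=> x0a min_x0 y0b min_y0.
have addE x y : x \in msupp a -> y \in msupp b ->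
    (x + y == x0 + y0) = (x == x0) && (y == y0).
  move=> xa yb; apply/eqP/andP => [xy|[/eqP -> /eqP ->]] //.
  have xx0 := lexkey_min_addE (min_x0 x xa) (min_y0 y yb) xy.
  by split; apply/eqP => //; move: xy; rewrite xx0 => /addrI.
rewrite -mcoeff_neq0 lmul_coef.
under eq_big_seq => x xa.
  under eq_big_seq => y yb do rewrite addE // -mulnb mulrnA.
  rewrite sum_seq_delta ?fset_uniq // y0b.
  over.
by rewrite /= sum_seq_delta ?fset_uniq // x0a mulf_neq0 ?mcoeff_neq0.
Qed.

Lemma supp_ge_lmul c a b s t :
  supp_ge c a s -> supp_ge c b t -> supp_ge c (lmul a b) (s + t).
Proof.
by move=> a_s b_t e /msupp_lmul[x [y [xa yb ->]]]; rewrite dotDr lerD ?a_s ?b_t.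
Qed.

Lemma supp_min_lmul c a b s t :
  supp_min c a s -> supp_min c b t -> supp_min c (lmul a b) (s + t).
Proof.
move=> [a_s [x1 x1a x1s]] [b_t [y1 y1b y1t]]; split; first exact: supp_ge_lmul.
have [x0 x0a min_x0] := exists_argmin_seq (lexkey c) x1a.
have [y0 y0b min_y0] := exists_argmin_seq (lexkey c) y1b.
exists (x0 + y0 : Lat n).
  exact: (lexmin_msupp_lmul x0a min_x0 y0b min_y0).
have x0s : dot c x0 = s.
  by apply/le_anti; rewrite a_s // -x1s lexkey_dot ?min_x0.
have y0t : dot c y0 = t.
  by apply/le_anti; rewrite b_t // -y1t lexkey_dot ?min_y0.
by rewrite dotDr x0s y0t.
Qed.

Lemma supp_min_const c a t : (exists e, e \in msupp a) ->
  (forall e, e \in msupp a -> dot c e = t) -> supp_min c a t.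
Proof.
move=> [e0 e0a] a_t.
by split; [move=> e /a_t -> | exists e0; rewrite ?a_t].
Qed.

Lemma supp_min_lone c : supp_min c (lone K n) 0.
Proof.
have supp1 : msupp (lone K n) = [fset 0]%fset by rewrite msuppU oner_eq0.
split; last by exists 0; rewrite ?supp1 ?in_fset1 ?dot0r.
by move=> e; rewrite supp1 in_fset1 => /eqP ->; rewrite dot0r.
Qed.

Lemma supp_min_lpow c a t k : supp_min c a t -> supp_min c (lpow a k) (t * k%:Z).
Proof.
move=> a_t; elim: k => [|k IH]; first by rewrite mulr0; apply: supp_min_lone.
by rewrite intS mulrDr mulr1; apply: supp_min_lmul.
Qed.

Lemma supp_ge_lmul_cancel c a b s t :
  supp_min c a s -> supp_ge c (lmul a b) t -> supp_ge c b (t - s).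
Proof.
move=> a_s ab_t e eb; have [y0 y0b min_y0] := exists_argmin_seq (dot c) eb.
have b_min : supp_min c b (dot c y0) by split=> //; exists y0.
have [_ [z zab zE]] := supp_min_lmul a_s b_min.
by rewrite lerBlDl (le_trans (ab_t z zab)) // zE lerD2l min_y0.
Qed.

End LaurentSupport.

Lemma msupp_lslice (K : fieldType) n (m : Mt n) (f : lpoly K n) i e :
  (e \in msupp (lslice m f i)) = (e \in msupp f) && (phi m e == i).
Proof.
rewrite -mcoeff_neq0 /lslice raddf_sum.
rewrite (eq_bigr (fun x => f@_x *+ (x == e))); last by move=> x _; exact: mcoeffU.
rewrite -big_filter sum_seq_delta ?filter_uniq ?fset_uniq // mem_filter.
rewrite andbC; case: (phi m e == i); last by rewrite andbF mulr0n eqxx.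
rewrite !andbT; case: (boolP (e \in msupp f)) => ef.
  by rewrite mulr1n mcoeff_neq0.
by rewrite mulr0n eqxx.
Qed.

Section Mutation.
Variables (K : fieldType) (n : nat) (m : Mt n) (g f f' : lpoly K n).
Variable h : int -> lpoly K n.
Hypothesis slice_pos : forall i : int, 0 <= i -> lslice m f i = lmul (lpow g `|i|%N) (h i).
Hypothesis slice_neg : forall i : int, i < 0 -> h i = lmul (lslice m f i) (lpow g `|i|%N).
Hypothesis f'E : f' = \sum_(i <- undup [seq phi m e | e <- msupp f]) h i.

Lemma supp_ge_mutation_slice c nu i t : supp_min c g nu ->
  supp_ge c (lslice m f i) t <-> supp_ge c (h i) (t - nu * i).
Proof.
move=> g_nu; have gk_nu := supp_min_lpow `|i|%N g_nu.
case: (ltrP i 0) => [i_lt0|i_ge0].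
  have iE : nu * `|i|%N%:Z = - (nu * i) by lia.
  rewrite slice_neg //; split => [f_t|h_t].
    by rewrite -iE; apply: supp_ge_lmul => //; case: gk_nu.
  rewrite lmulC in h_t; have := supp_ge_lmul_cancel gk_nu h_t.
  by rewrite iE opprK subrK.
have iE : nu * `|i|%N%:Z = nu * i by lia.
rewrite slice_pos //; split => [f_t|h_t].
  by rewrite -iE; apply: supp_ge_lmul_cancel f_t.
by rewrite -[t](subrK (nu * i)) addrC -{1}iE; apply: supp_ge_lmul => //; case: gk_nu.
Qed.

Hypothesis g_supp : exists q, q \in msupp g.
Hypothesis g_orth : forall q, q \in msupp g -> dot m.1 q = 0.

Lemma msupp_mutation_level i e : e \in msupp (h i) -> phi m e = i.
Proof.
(* As g lies on <m.1, .> = 0, bounds for m.1 and - m.1 pass from f_i to h_i unchanged. *)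
have level c t : (forall q, q \in msupp g -> dot c q = 0) ->
    supp_ge c (lslice m f i) t -> supp_ge c (h i) t.
  move=> g_c /(supp_ge_mutation_slice i t (supp_min_const g_supp g_c)).
  by rewrite mul0r subr0.
have slice_phi p : p \in msupp (lslice m f i) -> dot m.1 p = i - m.2.
  by rewrite msupp_lslice /phi => /andP[_ /eqP <-]; rewrite addrK.
have lb : supp_ge m.1 (h i) (i - m.2).
  by apply: level g_orth _ => p /slice_phi ->.
have ub : supp_ge (- m.1) (h i) (m.2 - i).
  apply: level => [q /g_orth|p /slice_phi]; rewrite dotNl => ->; first by rewrite oppr0.
  by rewrite opprB.
move=> e_h; move: (lb e e_h) (ub e e_h); rewrite dotNl /phi; lia.
Qed.

Lemma msupp_mutation e : (e \in msupp f') =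
  (phi m e \in [seq phi m x | x <- msupp f]) && (e \in msupp (h (phi m e))).
Proof.
rewrite -mcoeff_neq0 f'E raddf_sum.
rewrite (eq_bigr (fun i => (h i)@_e *+ (i == phi m e))); last first.
  move=> i _; case: eqVneq => [->//|ne]; rewrite mulr0n; apply: mcoeff_outdom.
  by apply: contra ne => /msupp_mutation_level ->.
rewrite sum_seq_delta ?undup_uniq // mem_undup.
by case: (_ \in _); rewrite ?mulr1n ?mcoeff_neq0 ?mulr0n ?eqxx.
Qed.

Lemma supp_ge_mutation c nu t : supp_min c g nu ->
  supp_ge c f t -> supp_ge (c + nu *: m.1) f' (t - nu * m.2).
Proof.
move=> g_nu f_t e; rewrite msupp_mutation => /andP[_ e_h].
have slice_t : supp_ge c (lslice m f (phi m e)) t.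
  by move=> p; rewrite msupp_lslice => /andP[/f_t].
move: ((supp_ge_mutation_slice _ _ g_nu).1 slice_t e e_h).
rewrite dotDl dotZl /phi; lia.
Qed.

Lemma supp_ge_mutation_inv c nu t : supp_min c g nu ->
  supp_ge c f' t -> supp_ge (c - nu *: m.1) f (t + nu * m.2).
Proof.
move=> g_nu f'_t p pf; set i := phi m p.
have h_t : supp_ge c (h i) (t + nu * i - nu * i).
  rewrite addrK => e e_h; apply: f'_t.
  by rewrite msupp_mutation (msupp_mutation_level e_h) map_f.
have := (supp_ge_mutation_slice _ _ g_nu).2 h_t p.
rewrite msupp_lslice pf eqxx => /(_ isT).
rewrite dotDl dotNl dotZl /i /phi; lia.
Qed.

End Mutation.

Section ConeDuality.
Variables (R : realType) (n : nat).
Implicit Types (S V : seq (Lat n)) (c v : Lat n) (h : Mt n).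

Lemma dotR_emb c v : dotR c (emb R v) = (dot c v)%:~R.
Proof. by rewrite /dotR /dot rmorph_sum; apply: eq_bigr => i _; rewrite mxE -intrM. Qed.

Lemma dotR_sum c k (l : 'I_k -> R) (x : 'I_k -> 'rV[R]_n) :
  dotR c (\sum_j l j *: x j) = \sum_j l j * dotR c (x j).
Proof.
rewrite /dotR; under eq_bigr do rewrite summxE mulr_sumr.
rewrite exchange_big; apply: eq_bigr => j _; rewrite mulr_sumr.
by apply: eq_bigr => i _; rewrite mxE mulrCA.
Qed.

Lemma emb_lconv S v : v \in S -> lconv R S (emb R v).
Proof.
move=> vS; have vS' : (index v S < size [seq emb R v | v <- S])%N.
  by rewrite size_map index_mem.
exists (fun j => (j == Ordinal vS')%:R); split; first by move=> j; rewrite ler0n.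
split; first by rewrite (bigD1 (Ordinal vS')) //= eqxx big1 ?addr0 // => j /negbTE ->.
rewrite (bigD1 (Ordinal vS')) //= eqxx scale1r big1 ?addr0 => [|j /negbTE ->]; last first.
  by rewrite scale0r.
by rewrite (nth_map 0) ?nth_index ?index_mem.
Qed.

Lemma lconv_mem S x : lconv R S x -> exists s, s \in S.
Proof.
case: S => [|s S] [lam [_ [lam1 _]]]; last by exists s; rewrite mem_head.
by move: lam1; rewrite big_ord0 => /eqP; rewrite eq_sym oner_eq0.
Qed.

Lemma lconv_ge S c t x :
  (forall s, s \in S -> t <= dot c s) -> lconv R S x -> t%:~R <= dotR c x.
Proof.
move=> S_t [lam [lam_ge0 [lam1 ->]]].
have -> : t%:~R = \sum_j lam j * t%:~R :> R by rewrite -mulr_suml lam1 mul1r.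
rewrite dotR_sum; apply: ler_sum => j _.
have jS : (j < size S)%N by rewrite -(size_map (@emb R n)).
by rewrite ler_wpM2l // (nth_map 0) // dotR_emb ler_int S_t // mem_nth.
Qed.

Lemma lconv_orth S c s :
  (forall x, lconv R S x -> dotR c x = 0) -> s \in S -> dot c s = 0.
Proof. by move=> S_c /emb_lconv/S_c/eqP; rewrite dotR_emb intr_eq0 => /eqP. Qed.

Lemma S_P_ext (A B : 'rV[R]_n -> Prop) h :
  (forall x, A x <-> B x) -> S_P A h -> S_P B h.
Proof.
move=> AB A_h w [k [l [x [lx w_def]]]]; apply: A_h; exists k, l, x; split=> // j.
by have [l_ge0 /AB] := lx j.
Qed.

Lemma S_P_lconvP V h :
  S_P (lconv R V) h <-> forall v, v \in V -> - h.2 <= dot h.1 v.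
Proof.
split=> [V_h v vV | V_h w [k [l [x [lx ->]]]]] /=.
  rewrite -subr_ge0 opprK -(ler0z R) intrD -dotR_emb -[h.2%:~R]mulr1.
  apply: (V_h (emb R v, 1)).
  exists 1%N, (fun _ => 1), (fun _ => emb R v); split; first by split; last exact: emb_lconv.
  by rewrite !big_ord1 scale1r.
rewrite dotR_sum mulr_sumr -big_split sumr_ge0 // => j _ /=.
have [l_ge0 Vx] := lx j; rewrite (mulrC _ (l j)) -mulrDr mulr_ge0 //.
by rewrite -(lerD2r (- h.2%:~R)) add0r addrK -intrN; apply: lconv_ge Vx.
Qed.

Lemma S_P_NewtonP (K : fieldType) (f : lpoly K n) h :
  S_P (Newton R f) h <-> supp_ge h.1 f (- h.2).
Proof. by rewrite /Newton map_id; apply: S_P_lconvP. Qed.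

End ConeDuality.

Section Eta.
Variables (n : nat) (VQ : seq (Lat n)).

Lemma eta_spec c : VQ != [::] ->
  (forall v, v \in VQ -> - Defs.eta VQ c <= dot v c) /\
  exists2 v, v \in VQ & dot v c = - Defs.eta VQ c.
Proof.
rewrite /Defs.eta opprK; case: VQ => [//|v0 s] _ /=.
split=> [v vQ|]; first exact: ge_bigmin_seq.
have [v vQ min_v] := exists_argmin_seq (fun v => dot v c) (mem_head v0 s).
exists v => //; apply/le_anti; rewrite ge_bigmin_seq //= big_seq.
by rewrite le_bigmin ?min_v ?mem_head.
Qed.

Lemma eta_addr_orth c w : (forall v, v \in VQ -> dot v w = 0) ->
  Defs.eta VQ (c + w) = Defs.eta VQ c.
Proof.
move=> Q_w; have dotE v : v \in VQ -> dot v (c + w) = dot v c.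
  by move=> vQ; rewrite dotDr Q_w ?addr0.
rewrite /Defs.eta; case: VQ Q_w dotE => [|v0 s] _ dotE /=.
  by rewrite !big_nil !(dotC 0) !dot0r.
by rewrite dotE ?mem_head //; congr (- _); apply: eq_big_seq => v /dotE.
Qed.

Lemma negmK : involutive (@negm n).
Proof. by move=> [c d]; rewrite /negm /= !opprK. Qed.

Lemma xiK m : (forall v, v \in VQ -> dot v m.1 = 0) ->
  cancel (xi VQ m) (xi VQ (negm m)).
Proof.
move=> Q_m [c d]; rewrite /xi /= -scaleNr eta_addr_orth => [|v vQ]; last first.
  by rewrite dotZr Q_m ?mulr0.
by rewrite scaleNr scalerN opprK subrK mulrN opprK subrK.
Qed.

Lemma xiNK m : (forall v, v \in VQ -> dot v m.1 = 0) ->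
  cancel (xi VQ (negm m)) (xi VQ m).
Proof.
move=> Q_m; rewrite -{2}(negmK m); apply: xiK => v /Q_m.
by rewrite dotNr => ->; rewrite oppr0.
Qed.

End Eta.

Lemma Newton_emb (R : realType) (K : fieldType) n (f : lpoly K n) e :
  e \in msupp f -> Newton R f (emb R e).
Proof. by rewrite /Newton map_id; apply: emb_lconv. Qed.

Lemma supp_min_eta (R : realType) (K : fieldType) n (g : lpoly K n) VQ c :
  VQ != [::] -> (forall x, Newton R g x <-> lconv R VQ x) ->
  supp_min c g (- Defs.eta VQ c).
Proof.
move=> VQ_ne gQ; have [Q_ge [v vQ vE]] := eta_spec c VQ_ne.
have Q_bound s : s \in VQ -> - Defs.eta VQ c <= dot c s by rewrite dotC; apply: Q_ge.
have g_ge : supp_ge c g (- Defs.eta VQ c).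
  move=> e /(Newton_emb R)/gQ/(lconv_ge Q_bound).
  by rewrite dotR_emb ler_int.
split=> //; have := (gQ _).2 (emb_lconv R vQ); rewrite /Newton map_id => g_v.
have [e0 e0g] := lconv_mem g_v.
have [x xg min_x] := exists_argmin_seq (dot c) e0g.
exists x => //; apply/le_anti; rewrite g_ge // andbT -vE (dotC v) -(ler_int R).
by rewrite -[X in _ <= X]dotR_emb; apply: lconv_ge min_x g_v.
Qed.

Theorem lemma2p10 (R : realType) (K : fieldType) (n : nat)
  (VP VQ : seq 'rV[int]_n) (m : 'rV[int]_n * int) :
  VP != [::] ->
  deformation_pair R VP m VQ ->
  forall f g f' : lpoly K n,
    normalized R f -> normalized R g ->
    (forall x, Newton R f x <-> lconv R VP x) ->
    (forall x, Newton R g x <-> lconv R VQ x) ->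
    Mutation m g f f' ->
    (forall h, S_P (lconv R VP) h -> S_P (Newton R f') (xi VQ m h)) /\
    (forall h, S_P (Newton R f') h -> S_P (lconv R VP) (xi VQ (negm m) h)) /\
    (forall h, S_P (lconv R VP) h -> xi VQ (negm m) (xi VQ m h) = h) /\
    (forall h, S_P (Newton R f') h -> xi VQ m (xi VQ (negm m) h) = h).
Proof.
(* Only Q <= (pi_M(m) = 0) is used from the deformation pair: the Minkowski-summand condition
   serves the existence of the mutation, which is a hypothesis here. *)
move=> _ [VQ_ne [Q_orth _]] f g f' _ _ fP gQ [h [slice_pos [slice_neg f'E]]].
have Q_m v : v \in VQ -> dot v m.1 = 0 by rewrite dotC; apply: lconv_orth Q_orth.
have g_m q : q \in msupp g -> dot m.1 q = 0.
  by apply: (@lconv_orth R) => x gx; apply/Q_orth/gQ; rewrite /Newton map_id.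
have g_min c := supp_min_eta c VQ_ne gQ.
have g_supp : exists q, q \in msupp g by have [_ [q qg _]] := g_min 0; exists q.
have S_Pf h0 : S_P (lconv R VP) h0 <-> S_P (Newton R f) h0.
  by split; apply: S_P_ext => x; rewrite fP.
split.
  move=> h0 /S_Pf/S_P_NewtonP f_h0; apply/S_P_NewtonP.
  have := supp_ge_mutation slice_pos slice_neg f'E g_supp g_m (g_min h0.1) f_h0.
  by rewrite /xi /= scaleNr mulNr opprK opprB (addrC (- h0.2)).
split.
  move=> h0 /S_P_NewtonP f'_h0; apply/S_Pf/S_P_NewtonP.
  have := supp_ge_mutation_inv slice_pos slice_neg f'E g_supp g_m (g_min h0.1) f'_h0.
  by rewrite /xi /= scaleNr scalerN mulNr mulrN !opprK opprD.
by split=> h0 _; [apply: xiK | apply: xiNK].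
Qed.
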